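(* Let $k\geq 1$ be fixed and $p\neq 0$ real. The inequality $$\frac{2}{k+2}\left( \frac{\sin x}{x}\right) ^{kp}+\frac{k}{k+2}\left( \frac{\tan x}{x}\right) ^{p}<1$$ holds for all $x\in (0,\pi/2)$ if and only if $-\dfrac{12}{5(k+2)}\leq p<0$. *)

From Stdlib Require Export Reals.

(* Put [alpha = ln (x / sin x)], [gamma = ln (tan x / x)], [r = -p], [a = k r] and
   [psi w = (e^w - 1) / w].  For [p < 0] the inequality reads
   [2 e^(a alpha) + k e^(-r gamma) < k + 2], i.e.
   [2 alpha psi (a alpha) < gamma psi (r gamma) e^(-r gamma)].

   For [p > 0] it fails near [PI/2], where [tan x / x] is unbounded.  For
   [p < 0] the left side is [1 + k p (12 + 5 p (k + 2)) x^4 / (180 (k + 2)) + O(x^6)],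
   so it fails near [0] below the threshold [-12/(5(k+2))].

   Above the threshold, [ln psi] is increasing, convex, and its slope is at most
   [1/2 + w/12].  Comparing logarithms, this reduces every admissible [(k, p)] to the
   endpoint [k = 1], [p = -4/5] plus one further inequality between [alpha] and
   [gamma].  These two trigonometric inequalities follow from Taylor bounds for
   [sin], [cos], [exp] in [t = x^2] and polynomial positivity certificates on
   [0 < t <= 987/400]. *)

From Stdlib Require Import Reals Lra List Factorial.
From Coquelicot Require Import Coquelicot.
Import ListNotations.
Open Scope R_scope.

Lemma exp_le_compat (a b : R) : a <= b -> exp a <= exp b.
Proof.
  intros Hab. destruct (Req_dec a b) as [->|Hne]; [lra|].
  left. apply exp_increasing. lra.
Qed.

Lemma ln_le_compat (a b : R) : 0 < a -> a <= b -> ln a <= ln b.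
Proof.
  intros Ha Hab. destruct (Req_dec a b) as [->|Hne]; [lra|].
  left. apply ln_increasing; lra.
Qed.

Lemma exp_opp_mul (y : R) : exp (- y) * exp y = 1.
Proof. rewrite <- exp_plus. replace (- y + y) with 0 by ring. apply exp_0. Qed.

Lemma le_of_derive_nonneg (h dh : R -> R) (a b : R) : a <= b ->
  (forall y, a <= y <= b -> is_derive h y (dh y)) ->
  (forall y, a <= y <= b -> 0 <= dh y) -> h a <= h b.
Proof.
  intros Hab Hd Hpos.
  destruct (Req_dec a b) as [->|Hne]; [lra|].
  destruct (MVT_cor2 h dh a b) as [c [Hc Hcab]]; [lra| |].
  - intros c Hc. apply is_derive_Reals, Hd. lra.
  - assert (0 <= dh c * (b - a)) by (apply Rmult_le_pos; [apply Hpos|]; lra). lra.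
Qed.

Lemma exp_ge_of_derive (Q dQ : R -> R) (y : R) : 0 <= y -> Q 0 = 1 ->
  (forall z, is_derive Q z (dQ z)) -> (forall z, 0 <= z <= y -> dQ z <= exp z) ->
  Q y <= exp y.
Proof.
  intros Hy HQ0 HdQ Hle.
  enough (Hmono : exp 0 - Q 0 <= exp y - Q y) by (rewrite exp_0, HQ0 in Hmono; lra).
  apply (le_of_derive_nonneg (fun z => exp z - Q z) (fun z => exp z - dQ z)); [lra| |].
  - intros z _. apply (is_derive_minus exp Q).
    + apply is_derive_Reals, derivable_pt_lim_exp.
    + apply HdQ.
  - intros z Hz. specialize (Hle z Hz). lra.
Qed.

Definition exp_taylor3 (y : R) : R := 1 + y + y^2/2 + y^3/6.
Definition exp_taylor4 (y : R) : R := exp_taylor3 y + y^4/24.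
Definition expN_taylor3 (y : R) : R := 1 - y + y^2/2 - y^3/6.

Lemma exp_ge_taylor2 (y : R) : 0 <= y -> 1 + y + y^2/2 <= exp y.
Proof.
  intros Hy. apply (exp_ge_of_derive (fun z => 1 + z + z^2/2) (fun z => 1 + z)); auto.
  - field.
  - intros z. auto_derive; auto. field.
  - intros z _. apply exp_ineq1_le.
Qed.

Lemma exp_ge_taylor3 (y : R) : 0 <= y -> exp_taylor3 y <= exp y.
Proof.
  intros Hy. apply (exp_ge_of_derive exp_taylor3 (fun z => 1 + z + z^2/2)); auto.
  - unfold exp_taylor3. field.
  - intros z. unfold exp_taylor3. auto_derive; auto. field.
  - intros z Hz. apply exp_ge_taylor2. lra.
Qed.

Lemma exp_ge_taylor4 (y : R) : 0 <= y -> exp_taylor4 y <= exp y.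
Proof.
  intros Hy. apply (exp_ge_of_derive exp_taylor4 exp_taylor3); auto.
  - unfold exp_taylor4, exp_taylor3. field.
  - intros z. unfold exp_taylor4, exp_taylor3. auto_derive; auto. field.
  - intros z Hz. apply exp_ge_taylor3. lra.
Qed.

Lemma exp_ge_taylor5 (y : R) : 0 <= y -> exp_taylor4 y + y^5/120 <= exp y.
Proof.
  intros Hy. apply (exp_ge_of_derive (fun z => exp_taylor4 z + z^5/120) exp_taylor4); auto.
  - cbv beta. unfold exp_taylor4, exp_taylor3. field.
  - intros z. unfold exp_taylor4, exp_taylor3. auto_derive; auto. field.
  - intros z Hz. apply exp_ge_taylor4. lra.
Qed.

Lemma expN_le_taylor2 (y : R) : 0 <= y -> exp (- y) <= 1 - y + y^2/2.
Proof.
  intros Hy.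
  enough (Hmono : 1 - 0 + 0^2/2 - exp (- 0) <= 1 - y + y^2/2 - exp (- y)) by
    (rewrite Ropp_0, exp_0 in Hmono; lra).
  apply (le_of_derive_nonneg (fun z => 1 - z + z^2/2 - exp (- z))
           (fun z => - 1 + z + exp (- z))); [lra| |].
  - intros z _. auto_derive; auto. field.
  - intros z _. pose proof (exp_ineq1_le (- z)). lra.
Qed.

Lemma expN_ge_taylor3 (y : R) : 0 <= y -> expN_taylor3 y <= exp (- y).
Proof.
  intros Hy. unfold expN_taylor3.
  enough (Hmono : exp (- 0) - (1 - 0 + 0^2/2 - 0^3/6) <= exp (- y) - (1 - y + y^2/2 - y^3/6))
    by (rewrite Ropp_0, exp_0 in Hmono; lra).
  apply (le_of_derive_nonneg (fun z => exp (- z) - (1 - z + z^2/2 - z^3/6))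
           (fun z => 1 - z + z^2/2 - exp (- z))); [lra| |].
  - intros z _. auto_derive; auto. field.
  - intros z Hz. pose proof (expN_le_taylor2 z (proj1 Hz)). lra.
Qed.

Lemma INR_fact_IZR (n : nat) (z : Z) : Z.of_nat (fact n) = z -> INR (fact n) = IZR z.
Proof. intros H. rewrite INR_IZR_INZ, H. reflexivity. Qed.

Ltac eval_facts H :=
  repeat match type of H with
  | context [INR (fact ?n)] =>
      let z := eval vm_compute in (Z.of_nat (fact n)) in
      rewrite (INR_fact_IZR n z) in H by (vm_compute; reflexivity)
  end.

Definition sinc_lb (t : R) : R := 1 - t/6 + t^2/120 - t^3/5040.
Definition sinc_ub (t : R) : R := 1 - t/6 + t^2/120.
Definition cos_t_lb (t : R) : R := 1 - t/2 + t^2/24 - t^3/720.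
Definition cos_t_ub (t : R) : R := cos_t_lb t + t^4/40320.

Lemma sin_taylor_bounds (x : R) : 0 <= x <= PI ->
  x * sinc_lb (x^2) <= sin x <= x * sinc_ub (x^2).
Proof.
  intros Hx.
  destruct (sin_bound x 1 (proj1 Hx) (proj2 Hx)) as [Hlb _].
  destruct (sin_bound x 0 (proj1 Hx) (proj2 Hx)) as [_ Hub].
  unfold sin_approx, sin_term in Hlb, Hub. cbn [sum_f_R0 Nat.mul Nat.add] in Hlb, Hub.
  eval_facts Hlb. eval_facts Hub.
  unfold sinc_lb, sinc_ub. split.
  - eapply Rle_trans; [right | exact Hlb]. field.
  - eapply Rle_trans; [exact Hub | right]. field.
Qed.

Lemma cos_taylor_bounds (x : R) : - PI / 2 <= x <= PI / 2 ->
  cos_t_lb (x^2) <= cos x <= cos_t_ub (x^2).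
Proof.
  intros Hx.
  destruct (cos_bound x 1 (proj1 Hx) (proj2 Hx)) as [Hlb Hub].
  unfold cos_approx, cos_term in Hlb, Hub. cbn [sum_f_R0 Nat.mul Nat.add] in Hlb, Hub.
  eval_facts Hlb. eval_facts Hub.
  unfold cos_t_ub, cos_t_lb. split.
  - eapply Rle_trans; [right | exact Hlb]. field.
  - eapply Rle_trans; [exact Hub | right]. field.
Qed.

Definition pos_on (P : R -> R) (a b : R) : Prop := forall t, a <= t <= b -> 0 < P t.

Lemma pos_on_cat (P : R -> R) (a b c : R) : pos_on P a b -> pos_on P b c -> pos_on P a c.
Proof.
  intros Hab Hbc t Ht.
  destruct (Rle_lt_dec t b); [apply Hab | apply Hbc]; lra.
Qed.

Lemma pos_on_shift (P : R -> R) (a b : R) :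
  (forall h, 0 <= h <= b - a -> 0 < P (a + h)) -> pos_on P a b.
Proof.
  intros H t Ht. replace t with (a + (t - a)) by ring. apply H. lra.
Qed.

Ltac pow_bounds h w n :=
  lazymatch n with
  | O => idtac
  | S ?m =>
      pose proof (pow_le h n ltac:(lra));
      pose proof (pow_incr h w n ltac:(lra));
      pow_bounds h w m
  end.

(* A polynomial of degree at most [n], expanded in powers of [h = t - a], is a
   linear combination of monomials [h^i] ranging over [[0, (b - a)^i]]; [lra]
   then finds the bound. *)
Ltac pos_on_piece n :=
  lazymatch goal with
  | |- pos_on ?P ?a ?b =>
      apply pos_on_shift; intros ?h ?Hh; try unfold P; cbv beta; ring_simplify;
      pow_bounds h (b - a) n; lra
  end.

Ltac pos_on_pieces n cuts :=
  lazymatch cuts with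
  | [] => pos_on_piece n
  | ?c :: ?cs => apply (pos_on_cat _ _ c); [pos_on_piece n | pos_on_pieces n cs]
  end.

Lemma lt_of_sub_eq_pow_mul (lhs rhs c t : R) (n : nat) :
  lhs - rhs = t ^ n * c -> 0 < t -> 0 < c -> rhs < lhs.
Proof.
  intros E Ht Hc.
  assert (0 < t ^ n * c) by (apply Rmult_lt_0_compat; [apply pow_lt|]; auto).
  lra.
Qed.

(* Just above [(PI/2)^2 = 2.46740...]. *)
Definition tmax : R := 987/400.

(* The series of [ln (x / sin x)] and [ln (tan x / x)] in [t = x^2] begin with
   [t/6 + t^2/180 + t^3/2835] and [t/3 + 7 t^2/90 + 62 t^3/2835]. *)
Definition alpha_lb (t : R) : R := t/6 + t^2/180.
Definition alpha_ub (t : R) : R := t/6 + t^2/180 + t^3/2000.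
Definition gamma_lb (t : R) : R := t/3 + 7*t^2/90 + t^3/60.
Definition gamma_ub (t : R) : R := t/3 + 7*t^2/90 + t^3/40.

(* Taylor polynomial of [(1 - z)^(4/5)]; all omitted terms are negative. *)
Definition binom45 (z : R) : R := 1 - 4/5*z - 2/25*z^2 - 4/125*z^3 - 11/625*z^4.

(* Each [poly_*] lemma below writes the difference of its two sides as [t^n] times
   an explicit polynomial [*_cert], positive on the relevant interval. *)
Definition alpha_ub_cert (t : R) : R :=
  (167/1134000) + t * ((-53/1814400) + t * ((-17/4665600) + t * ((-6773/27216000000) + t * ((-3331/97977600000) + t * ((-607/440899200000) + t * ((-6937/59049000000000) + t * ((-14311/5290790400000000) + t * ((-21631/79361856000000000) + t * ((-28373/17635968000000000000) + t * ((-101/186624000000000000) + t * ((-11/8709120000000000000) + t * (-1/1935360000000000000)))))))))))).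

Lemma poly_alpha_ub (t : R) : 0 < t <= tmax -> 1 < sinc_lb t * exp_taylor4 (alpha_ub t).
Proof.
  intros Ht. apply (lt_of_sub_eq_pow_mul _ _ (alpha_ub_cert t) t 3); [|lra|].
  - unfold alpha_ub_cert, sinc_lb, exp_taylor4, exp_taylor3, alpha_ub. field.
  - assert (P : pos_on alpha_ub_cert 0 tmax) by (unfold tmax; pos_on_piece 12%nat).
    apply P. lra.
Qed.

Definition gamma_lb_cert (t : R) : R :=
  (59/11340) + t * ((19601/5443200) + t * ((-1793/1360800) + t * ((-14111/61236000) + t * ((-30077/734832000) + t * ((17233/7348320000) + t * ((13079/44089920000) + t * ((283/4898880000) + t * ((-1/233280000) + t * (1/6531840000))))))))).

Lemma poly_gamma_lb (t : R) : 0 < t <= tmax ->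
  cos_t_ub t < sinc_lb t * expN_taylor3 (gamma_lb t).
Proof.
  intros Ht. apply (lt_of_sub_eq_pow_mul _ _ (gamma_lb_cert t) t 3); [|lra|].
  - unfold gamma_lb_cert, sinc_lb, cos_t_ub, cos_t_lb, expN_taylor3, gamma_lb. field.
  - assert (P : pos_on gamma_lb_cert 0 tmax)
      by (unfold tmax; pos_on_pieces 9%nat [987/800]).
    apply P. lra.
Qed.

Definition gamma_expm1_cert (t : R) : R :=
  (8/675) + t * ((749/202500) + t * ((-857/1518750) + t * ((-4169/22781250) + t * ((-1279087/27337500000) + t * ((-2114447/205031250000) + t * ((-4984601/6150937500000) + t * ((-1048127/20503125000000) + t * ((-21451/8542968750000) + t * ((-71/949218750000) + t * (-1/421875000000)))))))))).

Lemma poly_gamma_expm1 (t : R) : 0 < t <= tmax ->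
  1 < (5/4 - alpha_ub t - 2/5 * alpha_ub t ^ 2)
      * (4/5 + 8/25 * gamma_lb t + 32/375 * gamma_lb t ^ 2).
Proof.
  intros Ht. apply (lt_of_sub_eq_pow_mul _ _ (gamma_expm1_cert t) t 2); [|lra|].
  - unfold gamma_expm1_cert, alpha_ub, gamma_lb. field.
  - assert (P : pos_on gamma_expm1_cert 0 tmax) by (unfold tmax; pos_on_piece 10%nat).
    apply P. lra.
Qed.

Definition critical_cert (t : R) : R :=
  (79/67500) + t * ((79/196875) + t * ((-153389/567000000) + t * ((25206067/510300000000) + t * ((-3087989/567000000000) + t * ((42017729/105840000000000) + t * ((-1540833019/71442000000000000) + t * ((5791/6531840000000) + t * ((-7727/274337280000000) + t * ((158777/230443315200000000) + t * ((-11737/921773260800000000) + t * ((209/1229031014400000000) + t * ((-11/7374186086400000000) + t * (11/1651817683353600000000))))))))))))).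

Lemma poly_critical (t : R) : 0 < t <= tmax ->
  2 + binom45 (1 - cos_t_ub t) < 3 * expN_taylor3 (4/5 * alpha_ub t).
Proof.
  intros Ht. apply (lt_of_sub_eq_pow_mul _ _ (critical_cert t) t 3); [|lra|].
  - unfold critical_cert, binom45, cos_t_ub, cos_t_lb, expN_taylor3, alpha_ub. field.
  - assert (P : pos_on critical_cert 0 tmax)
      by (unfold tmax; pos_on_pieces 13%nat [987/800]).
    apply P. lra.
Qed.

Definition binom45_cert (z : R) : R :=
  (176/3125) + z * ((-88/625) + z * ((1584/15625) + z * ((-902/78125) + z * ((-1144/390625) + z * ((1188/9765625) + z * ((-17656/9765625) + z * ((-23102/48828125) + z * ((-42192/244140625) + z * ((-84728/1220703125) + z * ((-426064/30517578125) + z * ((-107239/30517578125) + z * ((-116644/152587890625) + z * ((-71874/762939453125) + z * ((-58564/3814697265625) + z * (-161051/95367431640625))))))))))))))).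

Lemma poly_binom45 (z : R) : 0 < z <= 1 -> (1 - z)^4 < binom45 z ^ 5.
Proof.
  intros Hz. apply (lt_of_sub_eq_pow_mul _ _ (binom45_cert z) z 5); [|lra|].
  - unfold binom45_cert, binom45. field.
  - assert (P : pos_on binom45_cert 0 1) by (pos_on_pieces 15%nat
      [1/4; 1/2; 5/8; 3/4; 13/16; 7/8; 29/32; 15/16; 61/64; 31/32; 63/64; 127/128]).
    apply P. lra.
Qed.

Definition alpha_lb_cert (t : R) : R :=
  (1/6480) + t * ((-1/16200) + t * ((-1/388800) + t * (-1/34992000))).

Lemma poly_alpha_lb (t : R) : 0 < t <= 1/100 -> sinc_ub t < expN_taylor3 (alpha_lb t).
Proof.
  intros Ht. apply (lt_of_sub_eq_pow_mul _ _ (alpha_lb_cert t) t 3); [|lra|].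
  - unfold alpha_lb_cert, sinc_ub, expN_taylor3, alpha_lb. field.
  - assert (P : pos_on alpha_lb_cert 0 (1/100)) by pos_on_piece 3%nat.
    apply P. lra.
Qed.

Definition gamma_ub_cert (t : R) : R :=
  (19/6480) + t * ((-7/900) + t * ((-169/129600) + t * ((-4879/8748000) + t * ((-12641/69984000) + t * ((-4757/167961600) + t * ((-88199/25194240000) + t * ((-503/933120000) + t * ((31/414720000) + t * (-1/276480000))))))))).

Lemma poly_gamma_ub (t : R) : 0 < t <= 1/100 ->
  sinc_ub t < cos_t_lb t * exp_taylor3 (gamma_ub t).
Proof.
  intros Ht. apply (lt_of_sub_eq_pow_mul _ _ (gamma_ub_cert t) t 3); [|lra|].
  - unfold gamma_ub_cert, sinc_ub, cos_t_lb, exp_taylor3, gamma_ub. field.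
  - assert (P : pos_on gamma_ub_cert 0 (1/100)) by pos_on_piece 9%nat.
    apply P. lra.
Qed.


Lemma poly_cos_t_ub_neg (t : R) : tmax <= t <= 4 -> cos_t_ub t < 0.
Proof.
  intros Ht.
  assert (P : pos_on (fun t => - cos_t_ub t) tmax 4).
  { unfold tmax, cos_t_ub, cos_t_lb. pos_on_pieces 4%nat
      [126949/51200; 63781/25600; 32197/12800; 3281/1280; 8509/3200; 4561/1600; 2587/800]. }
  specialize (P t Ht). lra.
Qed.

Lemma pow_le_inv (n : nat) (w b : R) : 0 <= w -> 0 <= b -> w ^ S n <= b ^ S n -> w <= b.
Proof.
  intros Hw Hb H. destruct (Rle_lt_dec w b) as [Hle|Hlt]; [exact Hle|].
  assert (b ^ n <= w ^ n) by (apply pow_incr; lra).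
  assert (0 < w ^ n) by (apply pow_lt; lra).
  simpl in H. nra.
Qed.

Lemma Rpower_4_5_le_binom45 (z : R) : 0 <= z < 1 -> Rpower (1 - z) (4/5) <= binom45 z.
Proof.
  intros Hz.
  assert (z ^ 2 <= 1 ^ 2) by (apply pow_incr; lra).
  assert (z ^ 3 <= 1 ^ 3) by (apply pow_incr; lra).
  assert (z ^ 4 <= 1 ^ 4) by (apply pow_incr; lra).
  assert (Hb : 0 < binom45 z) by (unfold binom45; lra).
  apply (pow_le_inv 4); [left; apply exp_pos | lra |].
  replace (Rpower (1 - z) (4/5) ^ 5) with ((1 - z) ^ 4).
  - destruct (Req_dec z 0) as [->|Hz0].
    + unfold binom45. lra.
    + left. apply poly_binom45. lra.
  - rewrite <- (Rpower_pow 5 (Rpower (1 - z) (4/5))), Rpower_mult by apply exp_pos.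
    replace (4/5 * INR 5) with (INR 4) by (simpl; field).
    rewrite Rpower_pow by lra. reflexivity.
Qed.

Lemma sqr_lt_tmax (x : R) : 0 < x < PI / 2 -> x ^ 2 < tmax.
Proof.
  intros Hx. pose proof PI_4.
  assert (Hcos : 0 < cos x) by (apply cos_gt_0; lra).
  pose proof (cos_taylor_bounds x ltac:(lra)) as [_ Hub].
  destruct (Rlt_le_dec (x ^ 2) tmax) as [Hlt|Hge]; [exact Hlt|].
  assert (x ^ 2 <= 4) by nra.
  pose proof (poly_cos_t_ub_neg (x ^ 2) ltac:(lra)). lra.
Qed.

Lemma ln_le_of_le_exp (u y : R) : 0 < u -> u <= exp y -> ln u <= y.
Proof. intros Hu H. rewrite <- (ln_exp y). apply ln_le_compat; assumption. Qed.

Lemma le_ln_of_exp_le (u y : R) : exp y <= u -> y <= ln u.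
Proof. intros H. rewrite <- (ln_exp y). apply ln_le_compat; [apply exp_pos | assumption]. Qed.

Definition alpha (x : R) : R := ln (x / sin x).
Definition gamma (x : R) : R := ln (tan x / x).

Section HalfPi.

Variable x : R.
Hypothesis Hx : 0 < x < PI / 2.

Let t := x ^ 2.

Lemma sin_x_pos : 0 < sin x.
Proof. pose proof PI_RGT_0. apply sin_gt_0; lra. Qed.

Lemma cos_x_pos : 0 < cos x.
Proof. apply cos_gt_0; lra. Qed.

Lemma t_range : 0 < t <= tmax.
Proof. unfold t. split; [nra | left; apply sqr_lt_tmax, Hx]. Qed.

Lemma sin_ge_sinc_lb : x * sinc_lb t <= sin x.
Proof. pose proof PI_RGT_0. apply (proj1 (sin_taylor_bounds x ltac:(lra))). Qed.

Lemma cos_le_cos_t_ub : cos x <= cos_t_ub t.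
Proof. pose proof PI_RGT_0. apply (proj2 (cos_taylor_bounds x ltac:(lra))). Qed.

Lemma sinc_lb_pos : 0 < sinc_lb t.
Proof.
  pose proof t_range. pose proof (poly_alpha_ub t t_range).
  assert (0 < exp_taylor4 (alpha_ub t)) by (unfold exp_taylor4, exp_taylor3, alpha_ub; nra).
  nra.
Qed.

Lemma alpha_pos : 0 < alpha x.
Proof.
  pose proof sin_x_pos. pose proof (sin_lt_x x (proj1 Hx)).
  unfold alpha. rewrite <- ln_1. apply ln_increasing; [lra|].
  apply (Rmult_lt_reg_r (sin x)); [lra|]. field_simplify; lra.
Qed.

Lemma alpha_le_ub : alpha x <= alpha_ub t.
Proof.
  pose proof sin_x_pos. pose proof sin_ge_sinc_lb. pose proof sinc_lb_pos. pose proof t_range.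
  pose proof (poly_alpha_ub t t_range).
  assert (Hah : 0 <= alpha_ub t) by (unfold alpha_ub; nra).
  pose proof (exp_ge_taylor4 _ Hah).
  assert (0 < exp_taylor4 (alpha_ub t)) by (unfold exp_taylor4, exp_taylor3; nra).
  assert (x <= sin x * exp_taylor4 (alpha_ub t)) by nra.
  assert (sin x * exp_taylor4 (alpha_ub t) <= sin x * exp (alpha_ub t))
    by (apply Rmult_le_compat_l; lra).
  apply ln_le_of_le_exp; [apply Rdiv_lt_0_compat; lra|].
  apply (Rmult_le_reg_r (sin x)); [lra|]. field_simplify; lra.
Qed.

Lemma gamma_ge_lb : gamma_lb t <= gamma x.
Proof.
  pose proof sin_x_pos. pose proof cos_x_pos. pose proof sin_ge_sinc_lb. pose proof sinc_lb_pos.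
  pose proof cos_le_cos_t_ub. pose proof t_range.
  pose proof (poly_gamma_lb t t_range).
  assert (Hcl : 0 <= gamma_lb t) by (unfold gamma_lb; nra).
  pose proof (expN_ge_taylor3 _ Hcl). pose proof (exp_opp_mul (gamma_lb t)).
  pose proof (exp_pos (gamma_lb t)).
  assert (0 < expN_taylor3 (gamma_lb t)) by nra.
  assert (x * cos x <= sin x * exp (- gamma_lb t)) by nra.
  apply le_ln_of_exp_le. unfold tan.
  apply (Rmult_le_reg_r (x * cos x)); [nra|]. field_simplify; [nra | split; lra].
Qed.

Lemma gamma_pos : 0 < gamma x.
Proof. pose proof gamma_ge_lb. pose proof t_range. unfold gamma_lb in *. nra. Qed.

Lemma gamma_eq : gamma x = - alpha x - ln (cos x).
Proof.
  pose proof sin_x_pos. pose proof cos_x_pos. unfold gamma, alpha, tan.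
  replace (sin x / cos x / x) with (/ (x / sin x * cos x)) by (field; lra).
  rewrite ln_Rinv by (apply Rmult_lt_0_compat; [apply Rdiv_lt_0_compat|]; lra).
  rewrite ln_mult by (try apply Rdiv_lt_0_compat; lra). ring.
Qed.

(* The endpoint case [k = 1], [p = -4/5] of the theorem. *)
Lemma critical_ineq : 2 * exp (4/5 * alpha x) + exp (- (4/5 * gamma x)) < 3.
Proof.
  pose proof cos_x_pos. pose proof cos_le_cos_t_ub. pose proof t_range.
  assert (Hcos : exp (- (4/5 * gamma x)) = exp (4/5 * alpha x) * Rpower (cos x) (4/5)).
  { unfold Rpower. rewrite gamma_eq, <- exp_plus. f_equal. ring. }
  assert (Hub1 : cos_t_ub t <= 1).
  { unfold cos_t_ub, cos_t_lb, tmax in *.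
    assert (0 <= t * (12 - t)) by nra.
    assert (0 <= t ^ 3 * (56 - t)) by (apply Rmult_le_pos; [apply pow_le|]; lra).
    nra. }
  assert (Hpow : Rpower (cos x) (4/5) <= binom45 (1 - cos_t_ub t)).
  { eapply Rle_trans; [apply Rle_Rpower_l; [lra | split; eassumption] |].
    replace (cos_t_ub t) with (1 - (1 - cos_t_ub t)) at 1 by ring.
    apply Rpower_4_5_le_binom45. lra. }
  set (y := 4/5 * alpha_ub t).
  assert (Hy : 0 <= y) by (unfold y, alpha_ub; nra).
  pose proof (poly_critical t t_range) as Hpoly. fold y in Hpoly.
  pose proof (expN_ge_taylor3 y Hy). pose proof (exp_opp_mul y). pose proof (exp_pos y).
  assert (Hexp : exp (4/5 * alpha x) <= exp y)
    by (apply exp_le_compat; unfold y; pose proof alpha_le_ub; lra).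
  pose proof (exp_pos (4/5 * alpha x)). pose proof (exp_pos (4/5 * ln (cos x))).
  unfold Rpower in Hcos, Hpow. rewrite Hcos.
  assert (exp y * (2 + binom45 (1 - cos_t_ub t)) < 3) by nra.
  nra.
Qed.

Lemma gamma_expm1_ineq :
  gamma x / (exp (4/5 * gamma x) - 1) <= 5/4 - alpha x - 2/5 * alpha x ^ 2.
Proof.
  pose proof gamma_pos. pose proof gamma_ge_lb. pose proof alpha_pos. pose proof alpha_le_ub.
  pose proof t_range.
  assert (Hcl : 0 < gamma_lb t) by (unfold gamma_lb; nra).
  set (c := gamma x) in *.
  set (d := 4/5 + 8/25 * gamma_lb t + 32/375 * gamma_lb t ^ 2).
  set (A := 5/4 - alpha x - 2/5 * alpha x ^ 2).
  assert (Hd : 0 < d) by (unfold d; nra).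
  pose proof (poly_gamma_expm1 t t_range) as Hpoly. fold d in Hpoly.
  assert (HA : 5/4 - alpha_ub t - 2/5 * alpha_ub t ^ 2 <= A) by (unfold A; nra).
  assert (HAd : 1 < A * d) by nra.
  pose proof (exp_ge_taylor3 (4/5 * c) ltac:(lra)). unfold exp_taylor3 in *.
  assert (Hdc : d <= 4/5 + 8/25 * c + 32/375 * c ^ 2) by (unfold d; nra).
  assert (Hexp : c * d <= exp (4/5 * c) - 1) by nra.
  assert (0 < A) by nra.
  assert (A * (c * d) <= A * (exp (4/5 * c) - 1)) by (apply Rmult_le_compat_l; lra).
  assert (Hc : c <= A * (exp (4/5 * c) - 1)) by nra.
  apply (Rmult_le_reg_r (exp (4/5 * c) - 1)); [nra|].
  replace (c / (exp (4/5 * c) - 1) * (exp (4/5 * c) - 1)) with c by (field; nra).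
  exact Hc.
Qed.

Lemma alpha_ge_lb_small : t <= 1/100 -> alpha_lb t <= alpha x.
Proof.
  intros Hsmall. pose proof sin_x_pos. pose proof t_range.
  assert (Hsin : sin x <= x * sinc_ub t) by (pose proof PI_RGT_0; apply (proj2 (sin_taylor_bounds x ltac:(lra)))).
  assert (Hal : 0 <= alpha_lb t) by (unfold alpha_lb; nra).
  pose proof (poly_alpha_lb t ltac:(lra)). pose proof (expN_ge_taylor3 _ Hal).
  pose proof (exp_opp_mul (alpha_lb t)). pose proof (exp_pos (alpha_lb t)).
  assert (sin x <= x * exp (- alpha_lb t)) by nra.
  assert (sin x * exp (alpha_lb t) <= x * exp (- alpha_lb t) * exp (alpha_lb t))
    by (apply Rmult_le_compat_r; lra).
  assert (sin x * exp (alpha_lb t) <= x) by nra.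
  apply le_ln_of_exp_le.
  apply (Rmult_le_reg_r (sin x)); [lra|]. field_simplify; lra.
Qed.

Lemma gamma_le_ub_small : t <= 1/100 -> gamma x <= gamma_ub t.
Proof.
  intros Hsmall. pose proof sin_x_pos. pose proof cos_x_pos. pose proof t_range.
  assert (Hsin : sin x <= x * sinc_ub t) by (pose proof PI_RGT_0; apply (proj2 (sin_taylor_bounds x ltac:(lra)))).
  assert (Hcos : cos_t_lb t <= cos x) by (pose proof PI_RGT_0; apply (proj1 (cos_taylor_bounds x ltac:(lra)))).
  assert (Hch : 0 <= gamma_ub t) by (unfold gamma_ub; nra).
  pose proof (poly_gamma_ub t ltac:(lra)). pose proof (exp_ge_taylor3 _ Hch).
  assert (0 < exp_taylor3 (gamma_ub t)) by (unfold exp_taylor3; nra).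
  assert (0 < cos_t_lb t) by (unfold cos_t_lb; nra).
  assert (cos_t_lb t * exp_taylor3 (gamma_ub t) <= cos x * exp (gamma_ub t))
    by (apply Rmult_le_compat; lra).
  assert (x * sinc_ub t <= x * (cos x * exp (gamma_ub t))) by (apply Rmult_le_compat_l; lra).
  assert (sin x <= x * cos x * exp (gamma_ub t)) by lra.
  apply ln_le_of_le_exp; [unfold tan; apply Rdiv_lt_0_compat; [apply Rdiv_lt_0_compat|]; lra|].
  unfold tan. apply (Rmult_le_reg_r (x * cos x)); [nra|]. field_simplify; [nra | split; lra].
Qed.

End HalfPi.

Lemma sub_le_of_derive_le (h dh : R -> R) (a b M : R) : a <= b ->
  (forall y, a <= y <= b -> is_derive h y (dh y)) ->
  (forall y, a <= y <= b -> dh y <= M) -> h b - h a <= (b - a) * M.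
Proof.
  intros Hab Hd Hle.
  enough (M * a - h a <= M * b - h b) by lra.
  apply (le_of_derive_nonneg (fun w => M * w - h w) (fun w => M - dh w)); [lra| |].
  - intros y Hy. apply (is_derive_minus (fun w => M * w) h).
    + auto_derive; auto. ring.
    + apply Hd, Hy.
  - intros y Hy. specialize (Hle y Hy). lra.
Qed.

Lemma sinh_ge (q : R) : 0 <= q -> 2 * q <= exp q - exp (- q).
Proof.
  intros Hq. pose proof (exp_ge_taylor3 q Hq). pose proof (expN_le_taylor2 q Hq).
  unfold exp_taylor3 in *. nra.
Qed.

Lemma expm1_gt (w : R) : 0 < w -> w < exp w - 1.
Proof. intros Hw. pose proof (exp_ineq1 w ltac:(lra)). lra. Qed.

Definition psi (w : R) : R := (exp w - 1) / w.
Definition lpsi (w : R) : R := ln (psi w).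
Definition dlpsi (w : R) : R := exp w / (exp w - 1) - 1 / w.

Lemma psi_pos (w : R) : 0 < w -> 0 < psi w.
Proof. intros Hw. pose proof (expm1_gt w Hw). apply Rdiv_lt_0_compat; lra. Qed.

Lemma lpsi_derive (w : R) : 0 < w -> is_derive lpsi w (dlpsi w).
Proof.
  intros Hw. pose proof (expm1_gt w Hw). pose proof (psi_pos w Hw).
  unfold lpsi, dlpsi, psi in *. auto_derive.
  - repeat split; lra.
  - field. split; lra.
Qed.

Lemma dlpsi_eq (w : R) : 0 < w -> dlpsi w = 1 + 1 / (exp w - 1) - 1 / w.
Proof. intros Hw. pose proof (expm1_gt w Hw). unfold dlpsi. field. split; lra. Qed.

Lemma dlpsi_nonneg (w : R) : 0 < w -> 0 <= dlpsi w.
Proof.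
  intros Hw. pose proof (expm1_gt w Hw).
  pose proof (exp_ineq1 (- w) ltac:(lra)). pose proof (exp_opp_mul w). pose proof (exp_pos w).
  assert (exp w - 1 <= w * exp w) by nra.
  unfold dlpsi.
  apply (Rmult_le_reg_r (w * (exp w - 1))); [nra|].
  field_simplify; [lra | split; lra].
Qed.

(* [1/2 + w/12] is the beginning of the Taylor series of [dlpsi]. *)
Lemma dlpsi_le (w : R) : 0 < w -> dlpsi w <= 1/2 + w/12.
Proof.
  intros Hw. pose proof (expm1_gt w Hw). rewrite dlpsi_eq by exact Hw.
  pose proof (exp_ge_taylor5 w ltac:(lra)). unfold exp_taylor4, exp_taylor3 in *.
  set (D := 1 - w/2 + w^2/12).
  assert (HD : 0 < D) by (pose proof (pow2_ge_0 (w - 3)); unfold D; nra).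
  assert (0 <= w^5 * (1/720 - w/1440 + w^2/1440))
    by (apply Rmult_le_pos; [apply pow_le; lra | pose proof (pow2_ge_0 (w - 1/2)); nra]).
  assert (Hk : w <= (exp w - 1) * D).
  { apply Rle_trans with ((w + w^2/2 + w^3/6 + w^4/24 + w^5/120) * D).
    - replace ((w + w^2/2 + w^3/6 + w^4/24 + w^5/120) * D)
        with (w + w^5 * (1/720 - w/1440 + w^2/1440)) by (unfold D; field). lra.
    - apply Rmult_le_compat_r; lra. }
  replace (1/2 + w/12) with (1 + D / w - 1 / w) by (unfold D; field; lra).
  enough (1 / (exp w - 1) <= D / w) by lra.
  apply (Rmult_le_reg_r (w * (exp w - 1))); [nra|].
  field_simplify; lra.
Qed.

Lemma dlpsi_nondecr (w1 w2 : R) : 0 < w1 -> w1 <= w2 -> dlpsi w1 <= dlpsi w2.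
Proof.
  intros Hw1 H12.
  apply (le_of_derive_nonneg dlpsi (fun w => 1 / w^2 - exp w / (exp w - 1)^2)); [lra| |].
  - intros w Hw. pose proof (expm1_gt w ltac:(lra)). unfold dlpsi. auto_derive.
    + repeat split; lra.
    + field. split; lra.
  - intros w Hw. pose proof (expm1_gt w ltac:(lra)).
    (* [(exp w - 1)^2 >= w^2 exp w] is [sinh (w/2) >= w/2] squared. *)
    set (q := w / 2).
    assert (HE : exp w = exp q * exp q) by (unfold q; rewrite <- exp_plus; f_equal; field).
    pose proof (sinh_ge q ltac:(unfold q; lra)). pose proof (exp_opp_mul q).
    pose proof (exp_pos q). pose proof (exp_pos (- q)).
    set (E := exp q) in *.
    assert (2 * q * E <= (E - exp (- q)) * E) by (apply Rmult_le_compat_r; lra).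
    assert (0 <= E * E - 1 - 2 * q * E) by nra.
    assert (0 <= E * E - 1 + 2 * q * E) by (unfold q; nra).
    assert (w^2 * exp w <= (exp w - 1)^2).
    { rewrite HE. replace w with (2 * q) by (unfold q; field).
      assert (0 <= (E * E - 1 - 2 * q * E) * (E * E - 1 + 2 * q * E)) by (apply Rmult_le_pos; lra).
      nra. }
    apply (Rmult_le_reg_r (w^2 * (exp w - 1)^2)); [apply Rmult_lt_0_compat; apply pow_lt; lra|].
    field_simplify; [lra | split; lra].
Qed.

Lemma lpsi_nondecr (w1 w2 : R) : 0 < w1 -> w1 <= w2 -> lpsi w1 <= lpsi w2.
Proof.
  intros Hw1 H12. apply (le_of_derive_nonneg lpsi dlpsi); [lra| |].
  - intros w Hw. apply lpsi_derive. lra.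
  - intros w Hw. apply dlpsi_nonneg. lra.
Qed.

Lemma lpsi_sub_le_dlpsi (w1 w2 : R) : 0 < w1 -> w1 <= w2 ->
  lpsi w2 - lpsi w1 <= (w2 - w1) * dlpsi w2.
Proof.
  intros Hw1 H12. apply (sub_le_of_derive_le lpsi dlpsi); [lra| |].
  - intros w Hw. apply lpsi_derive. lra.
  - intros w Hw. apply dlpsi_nondecr; lra.
Qed.

Lemma lpsi_sub_le_pade (w1 w2 : R) : 0 < w1 -> w1 <= w2 ->
  lpsi w2 - lpsi w1 <= (w2 - w1) * (1/2 + w2/12).
Proof.
  intros Hw1 H12. apply (sub_le_of_derive_le lpsi dlpsi); [lra| |].
  - intros w Hw. apply lpsi_derive. lra.
  - intros w Hw. pose proof (dlpsi_le w ltac:(lra)). lra.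
Qed.

Lemma expm1_eq_mul_psi (w : R) : w <> 0 -> exp w - 1 = w * psi w.
Proof. intros Hw. unfold psi. field. exact Hw. Qed.

Lemma one_sub_expN_eq_mul_psi (w : R) : w <> 0 ->
  1 - exp (- w) = w * psi w * exp (- w).
Proof.
  intros Hw. pose proof (exp_opp_mul w).
  replace (w * psi w * exp (- w)) with ((exp w - 1) * exp (- w)) by (unfold psi; field; exact Hw).
  lra.
Qed.

Lemma mean_lt_iff_psi (al c r a : R) : 0 < al -> 0 < c -> 0 < r -> 0 < a ->
  (2 * exp (a * al) + a / r * exp (- (r * c)) < 2 + a / r <->
   2 * al * psi (a * al) < c * psi (r * c) * exp (- (r * c))).
Proof.
  intros Hal Hc Hr Ha.
  assert (E : 2 + a / r - (2 * exp (a * al) + a / r * exp (- (r * c)))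
              = a * (c * psi (r * c) * exp (- (r * c)) - 2 * al * psi (a * al))).
  { replace (2 + a / r - (2 * exp (a * al) + a / r * exp (- (r * c))))
      with (a / r * (1 - exp (- (r * c))) - 2 * (exp (a * al) - 1)) by (field; lra).
    rewrite expm1_eq_mul_psi, one_sub_expN_eq_mul_psi by nra. field. lra. }
  split; intros H; nra.
Qed.

Lemma psi_lt_iff_ln (al c w1 w2 : R) : 0 < al -> 0 < c -> 0 < w1 -> 0 < w2 ->
  (2 * al * psi w1 < c * psi w2 * exp (- w2) <->
   ln (2 * al) + lpsi w1 < ln c + lpsi w2 - w2).
Proof.
  intros Hal Hc Hw1 Hw2. pose proof (psi_pos w1 Hw1). pose proof (psi_pos w2 Hw2).
  pose proof (exp_pos (- w2)).
  assert (L1 : ln (2 * al * psi w1) = ln (2 * al) + lpsi w1)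
    by (unfold lpsi; apply ln_mult; lra).
  assert (L2 : ln (c * psi w2 * exp (- w2)) = ln c + lpsi w2 - w2).
  { unfold lpsi. rewrite ln_mult, ln_exp, ln_mult by (lra || (apply Rmult_lt_0_compat; lra)). lra. }
  assert (0 < 2 * al * psi w1) by (apply Rmult_lt_0_compat; lra).
  assert (0 < c * psi w2 * exp (- w2))
    by (apply Rmult_lt_0_compat; [apply Rmult_lt_0_compat|]; lra).
  split; intros Hlt.
  - rewrite <- L1, <- L2. apply ln_increasing; assumption.
  - apply ln_lt_inv; [assumption | assumption |]. rewrite L1, L2. exact Hlt.
Qed.

(* Moving the parameters from the
   endpoint [a = r = 4/5] to [(a, r)] costs at most [(4/5 - r) (al + 2/5 al^2)] on
   the left (Lipschitz bound on [lpsi]) and gains at least as much on the right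
   (convexity of [lpsi]). *)
Lemma psi_comparison (al c r a : R) :
  0 < al -> 0 < c -> 0 < r <= 4/5 -> 0 < a <= 12/5 - 2 * r ->
  2 * al * psi (4/5 * al) < c * psi (4/5 * c) * exp (- (4/5 * c)) ->
  c / (exp (4/5 * c) - 1) <= 5/4 - al - 2/5 * al ^ 2 ->
  2 * al * psi (a * al) < c * psi (r * c) * exp (- (r * c)).
Proof.
  intros Hal Hc Hr Ha Hcrit Hexpm1.
  rewrite psi_lt_iff_ln in Hcrit |- * by nra.
  assert (Hleft : lpsi (a * al) <= lpsi (4/5 * al) + (4/5 - r) * (al + 2/5 * al ^ 2)).
  { destruct (Rle_lt_dec a (4/5)) as [Hle|Hgt].
    - pose proof (lpsi_nondecr (a * al) (4/5 * al) ltac:(nra) ltac:(nra)).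
      assert (0 <= (4/5 - r) * (al + 2/5 * al ^ 2)) by (apply Rmult_le_pos; nra). lra.
    - pose proof (lpsi_sub_le_pade (4/5 * al) (a * al) ltac:(nra) ltac:(nra)).
      assert (0 <= a * al - 4/5 * al) by nra.
      assert ((a * al - 4/5 * al) * (1/2 + a * al / 12)
                <= (a * al - 4/5 * al) * (1/2 + al / 5)) by (apply Rmult_le_compat_l; nra).
      nra. }
  assert (Hright : lpsi (4/5 * c) - lpsi (r * c) <= (4/5 - r) * (c - al - 2/5 * al ^ 2)).
  { pose proof (lpsi_sub_le_dlpsi (r * c) (4/5 * c) ltac:(nra) ltac:(nra)) as H.
    pose proof (expm1_gt (4/5 * c) ltac:(lra)).
    rewrite dlpsi_eq in H by lra.
    replace ((4/5 * c - r * c) * (1 + 1 / (exp (4/5 * c) - 1) - 1 / (4/5 * c)))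
      with ((4/5 - r) * (c + c / (exp (4/5 * c) - 1) - 5/4)) in H by (field; lra).
    assert ((4/5 - r) * (c + c / (exp (4/5 * c) - 1) - 5/4)
              <= (4/5 - r) * (c - al - 2/5 * al ^ 2)) by (apply Rmult_le_compat_l; lra).
    lra. }
  lra.
Qed.

Lemma mean_ge_of_cubic (al c r a : R) : 0 < r -> 0 <= a -> 0 <= al -> 0 <= c ->
  0 <= 2 * al + a * al ^ 2 - c + r * c ^ 2 / 2 - r ^ 2 * c ^ 3 / 6 ->
  2 + a / r <= 2 * exp (a * al) + a / r * exp (- (r * c)).
Proof.
  intros Hr Ha Hal Hc Hcubic.
  pose proof (exp_ge_taylor2 (a * al) ltac:(nra)).
  pose proof (expN_ge_taylor3 (r * c) ltac:(nra)). unfold expN_taylor3 in *.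
  assert (0 <= a / r) by (apply Rmult_le_pos; [lra | left; apply Rinv_0_lt_compat; lra]).
  assert (a / r * (1 - r * c + (r * c) ^ 2 / 2 - (r * c) ^ 3 / 6) <= a / r * exp (- (r * c)))
    by (apply Rmult_le_compat_l; lra).
  assert (a / r * (1 - r * c + (r * c) ^ 2 / 2 - (r * c) ^ 3 / 6)
          = a / r - a * (c - r * c ^ 2 / 2 + r ^ 2 * c ^ 3 / 6)) by (field; lra).
  assert (0 <= a * (2 * al + a * al ^ 2 - c + r * c ^ 2 / 2 - r ^ 2 * c ^ 3 / 6))
    by (apply Rmult_le_pos; lra).
  nra.
Qed.

Lemma cubic_antitone (r c C : R) : 0 <= r -> c <= C ->
  - C + r * C ^ 2 / 2 - r ^ 2 * C ^ 3 / 6 <= - c + r * c ^ 2 / 2 - r ^ 2 * c ^ 3 / 6.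
Proof.
  intros Hr HcC. set (u := r * c). set (v := r * C).
  assert (E : (- c + r * c ^ 2 / 2 - r ^ 2 * c ^ 3 / 6) - (- C + r * C ^ 2 / 2 - r ^ 2 * C ^ 3 / 6)
              = (C - c) * (1 - (u + v) / 2 + (u ^ 2 + u * v + v ^ 2) / 6)) by (unfold u, v; field).
  assert (0 < 1 - (u + v) / 2 + (u ^ 2 + u * v + v ^ 2) / 6).
  { pose proof (pow2_ge_0 (u + v - 2)). pose proof (pow2_ge_0 (u - v)). nra. }
  assert (0 <= (C - c) * (1 - (u + v) / 2 + (u ^ 2 + u * v + v ^ 2) / 6))
    by (apply Rmult_le_pos; lra).
  lra.
Qed.

(* The cubic is [(a + 2 r - 12/5) t^2 / 36 + O(t^3)]. *)
Lemma cubic_nonneg_small_t (t r a : R) : 0 < r -> 0 < a -> 0 < t <= 1/100 ->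
  t * (36 * (1 + r ^ 2)) <= a + 2 * r - 12/5 ->
  0 <= 2 * alpha_lb t + a * alpha_lb t ^ 2 - gamma_ub t
       + r * gamma_ub t ^ 2 / 2 - r ^ 2 * gamma_ub t ^ 3 / 6.
Proof.
  intros Hr Ha Ht Heta.
  set (A := alpha_lb t). set (C := gamma_ub t).
  assert (E : 2 * A - C = - t ^ 2 / 15 - t ^ 3 / 40) by (unfold A, C, alpha_lb, gamma_ub; field).
  assert (HA : t / 6 <= A) by (unfold A, alpha_lb; nra).
  assert (HC : t / 3 <= C <= t / 2) by (unfold C, gamma_ub; split; nra).
  assert (a * (t / 6) ^ 2 <= a * A ^ 2)
    by (apply Rmult_le_compat_l; [lra | apply pow_incr; lra]).
  assert (r * (t / 3) ^ 2 <= r * C ^ 2)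
    by (apply Rmult_le_compat_l; [lra | apply pow_incr; lra]).
  assert (r ^ 2 * C ^ 3 <= r ^ 2 * (t / 2) ^ 3)
    by (apply Rmult_le_compat_l; [apply pow_le; lra | apply pow_incr; lra]).
  assert (0 <= t ^ 2 * ((a + 2 * r - 12/5) / 36 - t * (1/40 + r ^ 2 / 48))).
  { apply Rmult_le_pos; [apply pow2_ge_0|]. pose proof (pow2_ge_0 r). nra. }
  nra.
Qed.

Definition sin_tan_mean (k p x : R) : R :=
  2 / (k + 2) * Rpower (sin x / x) (k * p) + k / (k + 2) * Rpower (tan x / x) p.

Lemma sin_tan_mean_eq (k p x : R) : 0 < x < PI / 2 ->
  sin_tan_mean k p x
  = 2 / (k + 2) * exp (- (k * p) * alpha x) + k / (k + 2) * exp (p * gamma x).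
Proof.
  intros Hx. pose proof (sin_x_pos x Hx).
  assert (Hln : ln (sin x / x) = - alpha x).
  { unfold alpha. replace (sin x / x) with (/ (x / sin x)) by (field; lra).
    apply ln_Rinv, Rdiv_lt_0_compat; lra. }
  unfold sin_tan_mean, Rpower, gamma. rewrite Hln.
  replace (k * p * - alpha x) with (- (k * p) * alpha x) by ring.
  reflexivity.
Qed.

Lemma mean_lt_1_iff (k u v : R) : 0 < k + 2 ->
  2 / (k + 2) * u + k / (k + 2) * v < 1 <-> 2 * u + k * v < 2 + k.
Proof.
  intros Hk.
  replace (2 / (k + 2) * u + k / (k + 2) * v) with ((2 * u + k * v) / (k + 2)) by (field; lra).
  split; intros H.
  - apply (Rmult_lt_compat_r (k + 2)) in H; [|lra].
    replace ((2 * u + k * v) / (k + 2) * (k + 2)) with (2 * u + k * v) in H by (field; lra). lra.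
  - apply (Rmult_lt_reg_r (k + 2)); [lra|].
    replace ((2 * u + k * v) / (k + 2) * (k + 2)) with (2 * u + k * v) by (field; lra). lra.
Qed.

Lemma critical_psi_ineq (x : R) : 0 < x < PI / 2 ->
  2 * alpha x * psi (4/5 * alpha x) < gamma x * psi (4/5 * gamma x) * exp (- (4/5 * gamma x)).
Proof.
  intros Hx.
  apply mean_lt_iff_psi; [apply alpha_pos | apply gamma_pos | lra | lra | ]; try exact Hx.
  replace ((4/5) / (4/5)) with 1 by field. pose proof (critical_ineq x Hx). lra.
Qed.

Lemma sin_tan_mean_lt_1 (k p x : R) : 1 <= k -> - (12 / (5 * (k + 2))) <= p < 0 ->
  0 < x < PI / 2 -> sin_tan_mean k p x < 1.
Proof.
  intros Hk Hp Hx.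
  set (r := - p). set (a := k * r).
  assert (Hr : 0 < r <= 4/5).
  { assert (12 / (5 * (k + 2)) * (k + 2) = 12/5) by (field; lra). unfold r. nra. }
  assert (Ha : 0 < a <= 12/5 - 2 * r).
  { assert (12 / (5 * (k + 2)) * (k + 2) = 12/5) by (field; lra). unfold a, r. nra. }
  pose proof (psi_comparison (alpha x) (gamma x) r a (alpha_pos x Hx) (gamma_pos x Hx) Hr Ha
                (critical_psi_ineq x Hx) (gamma_expm1_ineq x Hx)) as Hpsi.
  apply mean_lt_iff_psi in Hpsi; [|apply alpha_pos | apply gamma_pos | lra | lra]; try exact Hx.
  replace (a / r) with k in Hpsi by (unfold a; field; lra).
  rewrite sin_tan_mean_eq, mean_lt_1_iff by (assumption || lra).
  replace (- (k * p) * alpha x) with (a * alpha x) by (unfold a, r; ring).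
  replace (p * gamma x) with (- (r * gamma x)) by (unfold r; ring).
  exact Hpsi.
Qed.

Lemma sin_tan_mean_ge_1_of_pos (k p : R) : 0 < k -> 0 < p ->
  exists x, 0 < x < PI / 2 /\ 1 <= sin_tan_mean k p x.
Proof.
  intros Hk Hp.
  (* Choose [x] with [tan x / x] so large that [(tan x / x)^p > (k + 2) / k]. *)
  set (y := Rpower ((k + 2) / k) (/ p)).
  assert (Hy : 0 < y) by apply exp_pos.
  set (M := 2 * y + 1).
  pose proof (atan_bound M) as [B1 B2].
  assert (A0 : 0 < atan M) by (rewrite <- atan_0; apply atan_increasing; unfold M; lra).
  exists (atan M). split; [lra|].
  set (x := atan M) in *.
  pose proof PI_4.
  assert (Hratio : y < tan x / x).
  { replace (tan x) with M by (symmetry; apply tan_atan). apply (Rmult_lt_reg_r x); [lra|].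
    replace (M / x * x) with M by (field; lra). unfold M. nra. }
  assert (Hpow : (k + 2) / k < Rpower (tan x / x) p).
  { replace ((k + 2) / k) with (Rpower y p).
    - apply Rlt_Rpower_l; lra.
    - unfold y. rewrite Rpower_mult. replace (/ p * p) with 1 by (field; lra).
      apply Rpower_1. apply Rdiv_lt_0_compat; lra. }
  assert (0 < Rpower (sin x / x) (k * p)) by apply exp_pos.
  assert (k / (k + 2) * ((k + 2) / k) < k / (k + 2) * Rpower (tan x / x) p)
    by (apply Rmult_lt_compat_l; [apply Rdiv_lt_0_compat|]; lra).
  assert (0 < 2 / (k + 2) * Rpower (sin x / x) (k * p))
    by (apply Rmult_lt_0_compat; [apply Rdiv_lt_0_compat|]; lra).
  replace (k / (k + 2) * ((k + 2) / k)) with 1 in * by (field; lra).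
  unfold sin_tan_mean. lra.
Qed.

Lemma exists_small_t (r eta : R) : 0 < eta ->
  exists t, 0 < t <= 1/100 /\ t * (36 * (1 + r ^ 2)) <= eta.
Proof.
  intros Heta.
  assert (Hpos : 0 < 36 * (1 + r ^ 2)) by (pose proof (pow2_ge_0 r); lra).
  exists (Rmin (1/100) (eta / (36 * (1 + r ^ 2)))). split.
  - split; [apply Rmin_glb_lt; [lra | apply Rdiv_lt_0_compat; lra] | apply Rmin_l].
  - apply (Rmult_le_reg_r (/ (36 * (1 + r ^ 2)))); [apply Rinv_0_lt_compat; lra|].
    replace (Rmin (1/100) (eta / (36 * (1 + r ^ 2))) * (36 * (1 + r ^ 2)) * / (36 * (1 + r ^ 2)))
      with (Rmin (1/100) (eta / (36 * (1 + r ^ 2)))) by (field; lra).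
    apply Rmin_r.
Qed.

Lemma sin_tan_mean_ge_1_below (k p : R) : 0 < k -> p < - (12 / (5 * (k + 2))) ->
  exists x, 0 < x < PI / 2 /\ 1 <= sin_tan_mean k p x.
Proof.
  intros Hk Hp.
  set (r := - p). set (a := k * r).
  assert (Hr : 0 < r).
  { assert (0 < 12 / (5 * (k + 2))) by (apply Rdiv_lt_0_compat; lra). unfold r. lra. }
  assert (Ha : 0 < a) by (unfold a; nra).
  assert (Heta : 0 < a + 2 * r - 12/5).
  { assert (12 / (5 * (k + 2)) * (k + 2) = 12/5) by (field; lra). unfold a, r. nra. }
  destruct (exists_small_t r (a + 2 * r - 12/5) Heta) as [t [Ht Htr]].
  exists (sqrt t).
  assert (Hx2 : sqrt t ^ 2 = t) by (apply pow2_sqrt; lra).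
  assert (Hx : 0 < sqrt t < PI / 2).
  { pose proof PI2_3_2. assert (0 < sqrt t) by (apply sqrt_lt_R0; lra). split; nra. }
  split; [exact Hx|].
  pose proof (alpha_ge_lb_small (sqrt t) Hx ltac:(lra)) as Hal. rewrite Hx2 in Hal.
  pose proof (gamma_le_ub_small (sqrt t) Hx ltac:(lra)) as Hga. rewrite Hx2 in Hga.
  pose proof (alpha_pos (sqrt t) Hx). pose proof (gamma_pos (sqrt t) Hx).
  pose proof (cubic_nonneg_small_t t r a Hr Ha Ht Htr) as Hcubic.
  pose proof (cubic_antitone r (gamma (sqrt t)) (gamma_ub t) ltac:(lra) Hga).
  assert (a * alpha_lb t ^ 2 <= a * alpha (sqrt t) ^ 2).
  { apply Rmult_le_compat_l; [lra | apply pow_incr; split; [unfold alpha_lb; nra | lra]]. }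
  pose proof (mean_ge_of_cubic (alpha (sqrt t)) (gamma (sqrt t)) r a Hr ltac:(lra) ltac:(lra)
                ltac:(lra) ltac:(nra)) as Hmean.
  replace (a / r) with k in Hmean by (unfold a; field; lra).
  rewrite sin_tan_mean_eq by exact Hx.
  replace (- (k * p) * alpha (sqrt t)) with (a * alpha (sqrt t)) by (unfold a, r; ring).
  replace (p * gamma (sqrt t)) with (- (r * gamma (sqrt t))) by (unfold r; ring).
  apply Rnot_lt_le. rewrite mean_lt_1_iff by lra. lra.
Qed.

Theorem theorem3p2 (k p : R) (hk : 1 <= k) (hp : p <> 0) :
  (forall x : R, 0 < x < PI / 2 ->
     2 / (k + 2) * Rpower (sin x / x) (k * p)
       + k / (k + 2) * Rpower (tan x / x) p < 1)
  <-> (- (12 / (5 * (k + 2))) <= p /\ p < 0).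
Proof.
  split.
  - intros Hall.
    assert (Hfail : forall x, 0 < x < PI / 2 -> 1 <= sin_tan_mean k p x -> False)
      by (intros x Hx Hge; specialize (Hall x Hx); unfold sin_tan_mean in Hge; lra).
    destruct (Rlt_le_dec p 0) as [Hneg|Hnneg].
    + split; [|exact Hneg].
      destruct (Rle_lt_dec (- (12 / (5 * (k + 2)))) p) as [Hle|Hlt]; [exact Hle|].
      destruct (sin_tan_mean_ge_1_below k p ltac:(lra) Hlt) as [x [Hx Hge]].
      exfalso. exact (Hfail x Hx Hge).
    + destruct (sin_tan_mean_ge_1_of_pos k p ltac:(lra) ltac:(lra)) as [x [Hx Hge]].
      exfalso. exact (Hfail x Hx Hge).
  - intros Hp x Hx. exact (sin_tan_mean_lt_1 k p x hk Hp Hx).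
Qed.
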